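(* There exists a non-commutative bilinear algorithm that multiplies two $9\times 9$ matrices using $\langle 6,6,6\rangle+3\,\langle 6,6,3\rangle+3\,\langle 6,3,3\rangle$ multiplications. In particular, $$\langle 9,9,9\rangle\leq\langle 6,6,6\rangle+3\,\langle 6,6,3\rangle+3\,\langle 6,3,3\rangle .$$
   Context: Fix a field $\mathbb{K}$. A non-commutative bilinear algorithm for multiplying an $a\times b$ matrix $A$ by a $b\times c$ matrix $B$ using $r$ multiplications consists of $r$ products $t_k=\big(\sum_{i,j}\alpha^{(k)}_{ij}a_{ij}\big)\big(\sum_{j,l}\beta^{(k)}_{jl}b_{jl}\big)$ with scalars in $\mathbb{K}$, together with scalars $\gamma^{(k)}_{il}\in\mathbb{K}$ such that $(AB)_{il}=\sum_k\gamma^{(k)}_{il}t_k$ for all $i,l$. This identity must hold when the entries lie in an arbitrary, not necessarily commutative, associative $\mathbb{K}$-algebra. The quantity $\langle a,b,c\rangle$ denotes the minimal such $r$, i.e. the tensor rank of the matrix multiplication tensor of format $(a,b,c)$. *)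

From HB Require Import structures.
From mathcomp Require Import all_boot all_order all_algebra.
Set Implicit Arguments. Unset Strict Implicit. Unset Printing Implicit Defensive.
Import GRing.Theory.
Local Open Scope ring_scope.

(* The identity is required to hold
   for entries in an arbitrary associative K-algebra (not necessarily
   commutative), exactly as in the definition of the paper. *)
Definition bilinear_alg (K : fieldType) (a b c r : nat)
  (alpha : 'I_r -> 'I_a -> 'I_b -> K)
  (beta  : 'I_r -> 'I_b -> 'I_c -> K)
  (gamma : 'I_r -> 'I_a -> 'I_c -> K) : Prop :=
  forall (A : algType K) (x : 'I_a -> 'I_b -> A) (y : 'I_b -> 'I_c -> A)
         (i : 'I_a) (l : 'I_c),
    \sum_(j < b) x i j * y j l =
    \sum_(k < r) gamma k i l *:
       ((\sum_(i' < a) \sum_(j < b) alpha k i' j *: x i' j) *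
        (\sum_(j < b) \sum_(l' < c) beta k j l' *: y j l')).

Definition has_bilinear_alg (K : fieldType) (a b c r : nat) : Prop :=
  exists alpha beta gamma, @bilinear_alg K a b c r alpha beta gamma.

Definition is_mm_rank (K : fieldType) (a b c r : nat) : Prop :=
  has_bilinear_alg K a b c r /\
  forall r', has_bilinear_alg K a b c r' -> (r <= r')%N.

(* Split 9 = 6 + 3 and run Strassen's seven products on the resulting 2 x 2 block
   decomposition, zero-padding the smaller block (in its top-left corner) whenever blocks
   of different sizes are added.  The padded products have format (6,6,6), three cyclic
   rotations of (6,6,3) and three of (6,3,3), and a cyclic rotation of the format does
   not change the rank.  Measured in blocks of 3, the whole scheme is the Kronecker
   product of a padded Strassen decomposition of <3,3,3>, checked by computation, with
   the identity of <3,3,3>, and the image of a matrix multiplication tensor under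
   linear maps has rank at most that of the tensor. *)

From mathcomp Require Import all_boot all_order all_algebra.
From mathcomp Require Import ring zify.
Set Implicit Arguments. Unset Strict Implicit. Unset Printing Implicit Defensive.
Import GRing.Theory.
Local Open Scope ring_scope.

Section MatrixMultiplicationTensor.
Variable R : comPzRingType.

Definition kdelta (T : eqType) (x y : T) : R := (x == y)%:R.

Lemma kdeltaC (T : eqType) (x y : T) : kdelta x y = kdelta y x.
Proof. by rewrite /kdelta eq_sym. Qed.

Lemma sum_kdeltaZ (V : lmodType R) (T : finType) (x : T) (F : T -> V) :
  \sum_y kdelta y x *: F y = F x.
Proof.
rewrite (bigD1 x) //= /kdelta eqxx scale1r big1 ?addr0 // => y /negbTE ->.
by rewrite scale0r.
Qed.

Lemma sum_kdelta (T : finType) (x : T) (F : T -> R) : \sum_y kdelta y x * F y = F x.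
Proof. exact: (@sum_kdeltaZ R^o). Qed.

Lemma sum_kdelta3Z (V : lmodType R) (I J L : finType) (x : I) (y : J) (z : L)
    (F : I -> J -> L -> V) :
  \sum_i \sum_j \sum_k (kdelta i x * kdelta j y * kdelta k z) *: F i j k = F x y z.
Proof.
under eq_bigr => i _ do under eq_bigr => j _ do under eq_bigr => k _ do rewrite mulrC -scalerA.
under eq_bigr => i _ do under eq_bigr => j _ do rewrite sum_kdeltaZ mulrC -scalerA.
by under eq_bigr => i _ do rewrite sum_kdeltaZ; rewrite sum_kdeltaZ.
Qed.

Lemma sum_mul3 (I J L : finType) (f : I -> R) (g : J -> R) (h : L -> R) :
  \sum_i \sum_j \sum_l f i * g j * h l = (\sum_i f i) * (\sum_j g j) * (\sum_l h l).
Proof.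
rewrite big_distrlr big_distrl; apply: eq_bigr => i _.
by rewrite big_distrl; apply: eq_bigr => j _; rewrite big_distrr.
Qed.

Definition mm_tensor a b c (i0 : 'I_a) (j0 j1 : 'I_b) (l1 : 'I_c) (i : 'I_a) (l : 'I_c) : R :=
  kdelta i i0 * kdelta j0 j1 * kdelta l l1.

Definition mm_image a' b' c' a b c (Phi : 'I_a' -> 'I_b' -> 'I_a -> 'I_b -> R)
    (Psi : 'I_b' -> 'I_c' -> 'I_b -> 'I_c -> R) (Chi : 'I_a' -> 'I_c' -> 'I_a -> 'I_c -> R)
    i0 j0 j1 l1 i l : R :=
  \sum_(i' < a') \sum_(j' < b') \sum_(l' < c') Phi i' j' i0 j0 * Psi j' l' j1 l1 * Chi i' l' i l.

Definition unit_map m n (i : 'I_m) (j : 'I_n) (I : 'I_m) (J : 'I_n) : R := kdelta i I * kdelta j J.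

Lemma mm_image_unit a b c i0 j0 j1 l1 i l :
  mm_image (@unit_map a b) (@unit_map b c) (@unit_map a c) i0 j0 j1 l1 i l =
  mm_tensor i0 j0 j1 l1 i l.
Proof.
transitivity (\sum_i' \sum_j' \sum_l'
  kdelta i' i * kdelta i' i0 * (kdelta j' j0 * kdelta j' j1) * (kdelta l' l * kdelta l' l1)).
  by do 3 (apply: eq_bigr => ? _); rewrite /unit_map; ring.
by rewrite sum_mul3 !sum_kdelta.
Qed.

Definition unpair m n (k : 'I_(m * n)) : 'I_m * 'I_n :=
  enum_val (cast_ord (esym (mxvec_cast m n)) k).

Lemma mxvec_indexK m n (i : 'I_m) (j : 'I_n) : unpair (mxvec_index i j) = (i, j).
Proof. by rewrite /unpair cast_ordK enum_rankK. Qed.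

Lemma unpair_inj m n : injective (@unpair m n).
Proof. by move=> k k' /enum_val_inj /cast_ord_inj. Qed.

Lemma sum_mxvec_index m n (F : 'I_(m * n) -> R) :
  \sum_k F k = \sum_i \sum_j F (mxvec_index i j).
Proof. by rewrite pair_bigA (reindex _ (curry_mxvec_bij _ _)); apply: eq_bigr => -[i j]. Qed.

Lemma kdelta_unpair m n (k k' : 'I_(m * n)) :
  kdelta k k' = kdelta (unpair k).1 (unpair k').1 * kdelta (unpair k).2 (unpair k').2.
Proof.
rewrite /kdelta -natrM -(inj_eq (@unpair_inj m n)).
by case: (unpair k) (unpair k') => [? ?] [? ?]; rewrite xpair_eqE mulnb.
Qed.

Definition kron m n m2 n2 p q p2 q2 (U : 'I_m -> 'I_n -> 'I_m2 -> 'I_n2 -> R)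
    (V : 'I_p -> 'I_q -> 'I_p2 -> 'I_q2 -> R)
    (i : 'I_(m * p)) (j : 'I_(n * q)) (I : 'I_(m2 * p2)) (J : 'I_(n2 * q2)) : R :=
  U (unpair i).1 (unpair j).1 (unpair I).1 (unpair J).1 *
  V (unpair i).2 (unpair j).2 (unpair I).2 (unpair J).2.

Lemma mm_image_kron a' b' c' a b c d' e' f' d e f
    (Phi : 'I_a' -> 'I_b' -> 'I_a -> 'I_b -> R) (Psi : 'I_b' -> 'I_c' -> 'I_b -> 'I_c -> R)
    (Chi : 'I_a' -> 'I_c' -> 'I_a -> 'I_c -> R)
    (Phi' : 'I_d' -> 'I_e' -> 'I_d -> 'I_e -> R) (Psi' : 'I_e' -> 'I_f' -> 'I_e -> 'I_f -> R)
    (Chi' : 'I_d' -> 'I_f' -> 'I_d -> 'I_f -> R) i0 j0 j1 l1 i l :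
  mm_image (kron Phi Phi') (kron Psi Psi') (kron Chi Chi') i0 j0 j1 l1 i l =
  mm_image Phi Psi Chi (unpair i0).1 (unpair j0).1 (unpair j1).1 (unpair l1).1
    (unpair i).1 (unpair l).1 *
  mm_image Phi' Psi' Chi' (unpair i0).2 (unpair j0).2 (unpair j1).2 (unpair l1).2
    (unpair i).2 (unpair l).2.
Proof.
rewrite /mm_image big_distrlr sum_mxvec_index; apply: eq_bigr => o1 _; apply: eq_bigr => t1 _.
rewrite big_distrlr sum_mxvec_index; apply: eq_bigr => o2 _; apply: eq_bigr => t2 _.
rewrite big_distrlr sum_mxvec_index; apply: eq_bigr => o3 _; apply: eq_bigr => t3 _.
by rewrite /kron !mxvec_indexK /=; ring.
Qed.

Lemma mm_tensor_kron a b c d e f i0 j0 j1 l1 i l :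
  @mm_tensor (a * d) (b * e) (c * f) i0 j0 j1 l1 i l =
  mm_tensor (unpair i0).1 (unpair j0).1 (unpair j1).1 (unpair l1).1 (unpair i).1 (unpair l).1 *
  mm_tensor (unpair i0).2 (unpair j0).2 (unpair j1).2 (unpair l1).2 (unpair i).2 (unpair l).2.
Proof. by rewrite /mm_tensor !kdelta_unpair; ring. Qed.

End MatrixMultiplicationTensor.

Arguments kdelta {R T}.
Arguments kdeltaC {R T}.
Arguments mm_tensor {R a b c}.
Arguments unit_map {R m n}.

Section BilinearAlgorithms.
Variable K : fieldType.
Implicit Types a b c r : nat.

Definition alg_tensor a b c r (alpha : 'I_r -> 'I_a -> 'I_b -> K)
    (beta : 'I_r -> 'I_b -> 'I_c -> K) (gamma : 'I_r -> 'I_a -> 'I_c -> K)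
    i0 j0 j1 l1 i l : K :=
  \sum_k alpha k i0 j0 * beta k j1 l1 * gamma k i l.

Definition bilinear_form a b c (T : 'I_a -> 'I_b -> 'I_b -> 'I_c -> 'I_a -> 'I_c -> K)
    (A : algType K) (x : 'I_a -> 'I_b -> A) (y : 'I_b -> 'I_c -> A) i l : A :=
  \sum_i' \sum_j \sum_j' \sum_l' T i' j j' l' i l *: (x i' j * y j' l').

Lemma mm_bilinear_form a b c (A : algType K) (x : 'I_a -> 'I_b -> A) y i l :
  \sum_(j < b) x i j * y j l = bilinear_form (@mm_tensor K a b c) x y i l.
Proof.
rewrite /bilinear_form exchange_big; apply: eq_bigr => j _ /=.
rewrite -[LHS](sum_kdelta3Z i j l (fun i' j' l' => x i' j * y j' l')).
by do 3 (apply: eq_bigr => ? _); rewrite /mm_tensor (kdeltaC i) (kdeltaC j) (kdeltaC l).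
Qed.

Lemma alg_bilinear_form a b c r alpha beta gamma (A : algType K)
    (x : 'I_a -> 'I_b -> A) (y : 'I_b -> 'I_c -> A) i l :
  \sum_(k < r) gamma k i l *: ((\sum_i' \sum_j alpha k i' j *: x i' j) *
                               (\sum_j \sum_l' beta k j l' *: y j l')) =
  bilinear_form (alg_tensor alpha beta gamma) x y i l.
Proof.
transitivity (\sum_(k < r) \sum_i' \sum_j \sum_j' \sum_l'
  (alpha k i' j * beta k j' l' * gamma k i l) *: (x i' j * y j' l')).
  apply: eq_bigr => k _; rewrite mulr_suml scaler_sumr; apply: eq_bigr => i' _.
  rewrite mulr_suml scaler_sumr; apply: eq_bigr => j _.
  rewrite mulr_sumr scaler_sumr; apply: eq_bigr => j' _.
  rewrite mulr_sumr scaler_sumr; apply: eq_bigr => l' _.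
  by rewrite -scalerAl -scalerAr !scalerA; congr (_ *: _); ring.
do 4 (rewrite exchange_big; apply: eq_bigr => ? _).
by rewrite /alg_tensor scaler_suml.
Qed.

Definition comp_coef r m n m' n' (alpha : 'I_r -> 'I_m' -> 'I_n' -> K)
    (Phi : 'I_m' -> 'I_n' -> 'I_m -> 'I_n -> K) (k : 'I_r) (I : 'I_m) (J : 'I_n) : K :=
  \sum_i' \sum_j' alpha k i' j' * Phi i' j' I J.

Lemma comp_coef_unit r m n (alpha : 'I_r -> 'I_m -> 'I_n -> K) k I J :
  comp_coef alpha unit_map k I J = alpha k I J.
Proof.
rewrite /comp_coef /unit_map.
under eq_bigr => i' _ do under eq_bigr => j' _ do rewrite mulrC -mulrA.
by under eq_bigr => i' _ do rewrite -mulr_sumr sum_kdelta; rewrite sum_kdelta.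
Qed.

Lemma alg_tensor_comp a' b' c' a b c r alpha beta gamma
    (Phi : 'I_a' -> 'I_b' -> 'I_a -> 'I_b -> K) (Psi : 'I_b' -> 'I_c' -> 'I_b -> 'I_c -> K)
    (Chi : 'I_a' -> 'I_c' -> 'I_a -> 'I_c -> K) :
  @bilinear_alg K a' b' c' r alpha beta gamma -> forall i0 j0 j1 l1 i l,
  alg_tensor (comp_coef alpha Phi) (comp_coef beta Psi) (comp_coef gamma Chi) i0 j0 j1 l1 i l =
  mm_image Phi Psi Chi i0 j0 j1 l1 i l.
Proof.
move=> mulE i0 j0 j1 l1 i l.
have {}mulE i' l' := mulE K^o (fun i' j' => Phi i' j' i0 j0) (fun j' l' => Psi j' l' j1 l1) i' l'.
transitivity (\sum_i' \sum_l' (\sum_j' Phi i' j' i0 j0 * Psi j' l' j1 l1) * Chi i' l' i l);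
  last by apply: eq_bigr => i' _; rewrite exchange_big; apply: eq_bigr => l' _; rewrite mulr_suml.
under eq_bigr => i' _ do under eq_bigr => l' _ do rewrite mulE mulr_suml.
rewrite /alg_tensor; under eq_bigr => i' _ do rewrite exchange_big.
rewrite exchange_big; apply: eq_bigr => k _ /=.
rewrite /comp_coef [in LHS]mulrC mulr_suml; apply: eq_bigr => i' _.
by rewrite mulr_suml; apply: eq_bigr => l' _; rewrite /GRing.scale /=; ring.
Qed.

Lemma bilinear_algP a b c r alpha beta gamma :
  @bilinear_alg K a b c r alpha beta gamma <->
  forall i0 j0 j1 l1 i l, alg_tensor alpha beta gamma i0 j0 j1 l1 i l = mm_tensor i0 j0 j1 l1 i l.
Proof.
split=> [mulE i0 j0 j1 l1 i l | tensorE A x y i l].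
  rewrite -mm_image_unit -(alg_tensor_comp _ _ _ mulE).
  by apply: eq_bigr => k _; rewrite !comp_coef_unit.
rewrite mm_bilinear_form alg_bilinear_form.
by do 4 (apply: eq_bigr => ? _); rewrite tensorE.
Qed.

Lemma bilinear_alg_cycle a b c r alpha beta gamma :
  @bilinear_alg K a b c r alpha beta gamma ->
  @bilinear_alg K b c a r beta (fun k l i => gamma k i l) (fun k j i => alpha k i j).
Proof.
move/bilinear_algP=> tensorE; apply/bilinear_algP => j0 l0 l1 i1 j l.
transitivity (alg_tensor alpha beta gamma l j j0 l0 i1 l1); first by apply: eq_bigr => k _; ring.
by rewrite tensorE /mm_tensor (kdeltaC i1) (kdeltaC l1); ring.
Qed.

Definition cat_coef (X : Type) r1 r2 (f1 : 'I_r1 -> X) (f2 : 'I_r2 -> X) (k : 'I_(r1 + r2)) : X :=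
  match split k with inl k1 => f1 k1 | inr k2 => f2 k2 end.

Lemma alg_tensor_cat a b c r1 r2 alpha1 beta1 gamma1 alpha2 beta2 gamma2 i0 j0 j1 l1 i l :
  @alg_tensor a b c (r1 + r2) (cat_coef alpha1 alpha2) (cat_coef beta1 beta2)
    (cat_coef gamma1 gamma2) i0 j0 j1 l1 i l =
  alg_tensor alpha1 beta1 gamma1 i0 j0 j1 l1 i l + alg_tensor alpha2 beta2 gamma2 i0 j0 j1 l1 i l.
Proof.
rewrite /alg_tensor big_split_ord /cat_coef.
by congr (_ + _); apply: eq_bigr => k _; rewrite ?(unsplitK (inl _ k)) ?(unsplitK (inr _ k)).
Qed.

Definition tensor_rank_le a b c (T : 'I_a -> 'I_b -> 'I_b -> 'I_c -> 'I_a -> 'I_c -> K) r :=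
  exists alpha beta gamma, forall i0 j0 j1 l1 i l,
    @alg_tensor a b c r alpha beta gamma i0 j0 j1 l1 i l = T i0 j0 j1 l1 i l.

Lemma has_bilinear_algE a b c r :
  has_bilinear_alg K a b c r <-> tensor_rank_le (@mm_tensor K a b c) r.
Proof. by split=> -[alpha [beta [gamma /bilinear_algP]]]; exists alpha, beta, gamma. Qed.

Lemma tensor_rank_le_ext a b c (T T' : 'I_a -> 'I_b -> 'I_b -> 'I_c -> 'I_a -> 'I_c -> K) r :
  (forall i0 j0 j1 l1 i l, T i0 j0 j1 l1 i l = T' i0 j0 j1 l1 i l) ->
  tensor_rank_le T r -> tensor_rank_le T' r.
Proof.
move=> eqT [alpha [beta [gamma tensorE]]]; exists alpha, beta, gamma => *.
by rewrite tensorE eqT.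
Qed.

Lemma tensor_rank_le_image a' b' c' a b c r alpha beta gamma
    (Phi : 'I_a' -> 'I_b' -> 'I_a -> 'I_b -> K) (Psi : 'I_b' -> 'I_c' -> 'I_b -> 'I_c -> K)
    (Chi : 'I_a' -> 'I_c' -> 'I_a -> 'I_c -> K) :
  @bilinear_alg K a' b' c' r alpha beta gamma -> tensor_rank_le (mm_image Phi Psi Chi) r.
Proof.
by move=> mulE; exists (comp_coef alpha Phi), (comp_coef beta Psi), (comp_coef gamma Chi);
  exact: alg_tensor_comp.
Qed.

Lemma tensor_rank_le_sum a b c n
    (T : 'I_n -> 'I_a -> 'I_b -> 'I_b -> 'I_c -> 'I_a -> 'I_c -> K) (r : 'I_n -> nat) :
  (forall k, tensor_rank_le (T k) (r k)) ->
  tensor_rank_le (fun i0 j0 j1 l1 i l => \sum_k T k i0 j0 j1 l1 i l) (\sum_k r k)%N.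
Proof.
elim: n T r => [|n IH] T r rankT.
  rewrite big_ord0; exists (fun _ _ _ => 0), (fun _ _ _ => 0), (fun _ _ _ => 0) => *.
  by rewrite /alg_tensor !big_ord0.
have [alpha1 [beta1 [gamma1 tensorE1]]] := IH _ _ (fun k => rankT (widen_ord (leqnSn n) k)).
have [alpha2 [beta2 [gamma2 tensorE2]]] := rankT ord_max.
rewrite big_ord_recr /=.
exists (cat_coef alpha1 alpha2), (cat_coef beta1 beta2), (cat_coef gamma1 gamma2) => *.
by rewrite alg_tensor_cat tensorE1 tensorE2 big_ord_recr.
Qed.

End BilinearAlgorithms.

(* An index in 'I_3 counts blocks of three rows (or columns) of a 9 x 9 matrix: the
   6-block [false] covers the indices 0 and 1, the 3-block [true] the index 2.  Then
   [block_embed b o O] says that position [o] of block [b], padded to size 6 if needed,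
   is the index [O]. *)
Definition block_embed (b : bool) (o O : nat) : bool :=
  if b then (O == 2) && (o == 0) else (O == o) && (O < 2)%N.

Definition padded (u : bool -> bool -> int) (o1 o2 O1 O2 : nat) : int :=
  \sum_(b1 <- [:: false; true]) \sum_(b2 <- [:: false; true])
    u b1 b2 *+ (block_embed b1 o1 O1 && block_embed b2 o2 O2).

Definition block2 (x00 x01 x10 x11 : int) (b1 b2 : bool) : int :=
  if b1 then (if b2 then x11 else x10) else (if b2 then x01 else x00).

Record padded_product := PaddedProduct {
  left_coef : bool -> bool -> int;
  right_coef : bool -> bool -> int;
  out_coef : bool -> bool -> int;
  dim_p : nat;
  dim_q : nat;
  dim_s : nat
}.

(* Strassen's k-th product (sum_b u_b A_b) (sum_b v_b B_b) enters the block C_b of the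
   result with coefficient w_b, where u, v, w are [left_coef], [right_coef], [out_coef]
   and [block2 x00 x01 x10 x11] lists the coefficients of the blocks 00, 01, 10, 11; the
   dimensions are those of the padded product, in blocks of 3. *)
Definition strassen (k : nat) : padded_product :=
  match k with
  | 0 => PaddedProduct (block2 1 0 0 1) (block2 1 0 0 1) (block2 1 0 0 1) 2 2 2
  | 1 => PaddedProduct (block2 0 0 1 1) (block2 1 0 0 0) (block2 0 0 1 (-1)) 1 2 2
  | 2 => PaddedProduct (block2 1 0 0 0) (block2 0 1 0 (-1)) (block2 0 1 0 1) 2 2 1
  | 3 => PaddedProduct (block2 0 0 0 1) (block2 (-1) 0 1 0) (block2 1 0 1 0) 1 1 2
  | 4 => PaddedProduct (block2 1 1 0 0) (block2 0 0 0 1) (block2 (-1) 1 0 0) 2 1 1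
  | 5 => PaddedProduct (block2 (-1) 0 1 0) (block2 1 1 0 0) (block2 0 0 0 1) 1 2 1
  | _ => PaddedProduct (block2 0 1 0 (-1)) (block2 0 0 1 1) (block2 1 0 0 0) 2 1 2
  end%N.

Definition padded_term (P : padded_product) (A B C D E F : nat) : int :=
  \sum_(0 <= o1 < dim_p P) \sum_(0 <= o2 < dim_q P) \sum_(0 <= o3 < dim_s P)
    padded (left_coef P) o1 o2 A B * padded (right_coef P) o2 o3 C D *
    padded (out_coef P) o1 o3 E F.

(* Stated over ranges of nat rather than ordinals, whose enumeration does not evaluate. *)
Lemma padded_strassen_check :
  \big[andb/true]_(0 <= A < 3) \big[andb/true]_(0 <= B < 3) \big[andb/true]_(0 <= C < 3)
  \big[andb/true]_(0 <= D < 3) \big[andb/true]_(0 <= E < 3) \big[andb/true]_(0 <= F < 3)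
    (\sum_(0 <= k < 7) padded_term (strassen k) A B C D E F ==
     ((E == A) && (B == C) && (F == D))%:R).
Proof. by rewrite /padded_term /padded bigop.unlock; vm_compute. Qed.

Lemma big_andb_nat n (Q : nat -> bool) :
  \big[andb/true]_(0 <= i < n) Q i -> forall i : 'I_n, Q i.
Proof. by rewrite big_mkord big_andE => /forallP. Qed.

Lemma padded_strassen (A B C D E F : 'I_3) :
  \sum_(k < 7) padded_term (strassen k) A B C D E F = ((E == A) && (B == C) && (F == D))%:R.
Proof.
move: padded_strassen_check.
move=> /big_andb_nat/(_ A)/big_andb_nat/(_ B)/big_andb_nat/(_ C)/big_andb_nat/(_ D).
by move=> /big_andb_nat/(_ E)/big_andb_nat/(_ F)/eqP; rewrite big_mkord.
Qed.

Section PaddedStrassenBlocks.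
Variable K : fieldType.

Definition padded_map (u : bool -> bool -> int) p q (o1 : 'I_p) (o2 : 'I_q) (O1 O2 : 'I_3) : K :=
  (padded u o1 o2 O1 O2)%:~R.

Definition block_map (u : bool -> bool -> int) p q :
    'I_(p * 3) -> 'I_(q * 3) -> 'I_(3 * 3) -> 'I_(3 * 3) -> K :=
  kron (@padded_map u p q) (@unit_map K 3 3).

Definition strassen_tensor k : 'I_9 -> 'I_9 -> 'I_9 -> 'I_9 -> 'I_9 -> 'I_9 -> K :=
  mm_image (@block_map (left_coef (strassen k)) (dim_p (strassen k)) (dim_q (strassen k)))
           (@block_map (right_coef (strassen k)) (dim_q (strassen k)) (dim_s (strassen k)))
           (@block_map (out_coef (strassen k)) (dim_p (strassen k)) (dim_s (strassen k))).

Lemma mm_image_padded (P : padded_product) A B C D E F :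
  mm_image (@padded_map (left_coef P) (dim_p P) (dim_q P))
           (@padded_map (right_coef P) (dim_q P) (dim_s P))
           (@padded_map (out_coef P) (dim_p P) (dim_s P)) A B C D E F =
  (padded_term P A B C D E F)%:~R.
Proof.
rewrite /padded_term big_mkord rmorph_sum; apply: eq_bigr => o1 _.
rewrite big_mkord rmorph_sum; apply: eq_bigr => o2 _.
by rewrite big_mkord rmorph_sum; apply: eq_bigr => o3 _; rewrite !rmorphM.
Qed.

Lemma strassen_decomposition i0 j0 j1 l1 i l :
  \sum_(k < 7) strassen_tensor k i0 j0 j1 l1 i l =
  @mm_tensor K (3 * 3) (3 * 3) (3 * 3) i0 j0 j1 l1 i l.
Proof.
under eq_bigr do rewrite /strassen_tensor mm_image_kron mm_image_unit mm_image_padded.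
rewrite -big_distrl -rmorph_sum padded_strassen mm_tensor_kron rmorph_nat.
by congr (_ * _); rewrite /mm_tensor /kdelta -!natrM !mulnb.
Qed.

End PaddedStrassenBlocks.

Theorem lemma2 (K : fieldType) (r666 r663 r633 : nat) :
  is_mm_rank K 6 6 6 r666 ->
  is_mm_rank K 6 6 3 r663 ->
  is_mm_rank K 6 3 3 r633 ->
  has_bilinear_alg K 9 9 9 (r666 + 3 * r663 + 3 * r633) /\
  (forall r999, is_mm_rank K 9 9 9 r999 ->
     (r999 <= r666 + 3 * r663 + 3 * r633)%N).
Proof.
move=> [[? [? [? mul666]]] _] [[? [? [? mul663]]] _] [[? [? [? mul633]]] _].
suff alg999 : has_bilinear_alg K 9 9 9 (r666 + 3 * r663 + 3 * r633).
  by split=> // r999 [_ /(_ _ alg999)].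
pose rank k := nth 0%N [:: r666; r663; r663; r633; r633; r633; r663] k.
have -> : (r666 + 3 * r663 + 3 * r633 = \sum_(k < 7) rank k)%N.
  by rewrite !big_ord_recr big_ord0 /rank /=; lia.
apply/has_bilinear_algE.
apply: tensor_rank_le_ext (@strassen_decomposition K) _.
apply: tensor_rank_le_sum => -[[|[|[|[|[|[|[|//]]]]]]] ?]; apply: tensor_rank_le_image.
- exact: mul666.
- exact: bilinear_alg_cycle (bilinear_alg_cycle mul663).
- exact: mul663.
- exact: bilinear_alg_cycle mul633.
- exact: mul633.
- exact: bilinear_alg_cycle (bilinear_alg_cycle mul633).
- exact: bilinear_alg_cycle mul663.
Qed.
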